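(* Let $w,h\ge 1$ and $G=P_w(U)\sqcap P_h$. (1) If $U=\{1\}$ or $U=\{w\}$, then $Z(G)\le \lceil h/2\rceil$. (2) If $U=\{i\}$ with $1<i<w$, then $Z(G)\le h$.
   Context: All graphs are finite, simple and undirected. Zero forcing: given a graph $G$ and a set $S\subseteq V(G)$ of initially filled vertices, the color change rule says that if a filled vertex $v$ has exactly one unfilled neighbor $u$, then $v$ forces $u$ to become filled. $S$ is a zero forcing set if repeatedly applying this rule eventually fills every vertex of $G$. The zero forcing number $Z(G)$ is the minimum cardinality of a zero forcing set of $G$. The path $P_n$ has vertex set $\{1,\dots,n\}$ and edges $\{k,k+1\}$ for $1\le k\le n-1$. Generalized hierarchical product: for graphs $W,H$ and $U\subseteq V(W)$ (the root set), $W(U)\sqcap H$ is the graph with vertex set $V(W)\times V(H)$ in which $(x_1,y_1)$ and $(x_2,y_2)$ are adjacent iff either ($x_1=x_2\in U$ and $y_1y_2\in E(H)$) or ($y_1=y_2$ and $x_1x_2\in E(W)$). *)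

From mathcomp Require Import all_boot.
Set Implicit Arguments. Unset Strict Implicit. Unset Printing Implicit Defensive.

Section ZeroForcing.
Variable T : finType.
Variable e : rel T.

(* Performing the
   forcings of one round sequentially is also legal, so this is just a
   grouping of individual forces. *)
Definition force_step (F : {set T}) : {set T} :=
  F :|: [set u | (u \notin F) &&
          [exists v, [&& v \in F, e v u &
             [forall x, (e v x && (x \notin F)) ==> (x == u)]]]].

(* The final coloring obtained from S by applying the rule until no more
   forces are possible (#|T| rounds suffice). *)
Definition zf_closure (S : {set T}) : {set T} := iter #|T| force_step S.

Definition zero_forcing_set (S : {set T}) : bool := zf_closure S == setT.

(* Z(G): minimum cardinality of a zero forcing set (V(G) itself is always one,
   so the bound #|T| used as the neutral element is never the strict min). *)
Definition zero_forcing_number : nat :=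
  \big[minn/#|T|]_(S : {set T} | zero_forcing_set S) #|S|.
End ZeroForcing.

(* Path P_n on vertex set 'I_n (vertex k+1 of the paper is ordinal k). *)
Definition path_adj (n : nat) : rel 'I_n :=
  fun a b => (a.+1 == b :> nat) || (b.+1 == a :> nat).

Definition hprod (A B : finType) (eW : rel A) (U : {set A}) (eH : rel B)
  : rel (A * B) :=
  fun x y => [&& x.1 == y.1, x.1 \in U & eH x.2 y.2]
             || ((x.2 == y.2) && eW x.1 y.1).

Definition path_hprod (w h : nat) (U : {set 'I_w}) : rel ('I_w * 'I_h) :=
  hprod (@path_adj w) U (@path_adj h).

From mathcomp Require Import all_boot zify.
Set Implicit Arguments. Unset Strict Implicit. Unset Printing Implicit Defensive.

(* Part (2): for any root set the first column forces everything, since once a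
   column is filled each of its vertices has only its right neighbour unfilled.
   Part (1): the reflection a |-> w-1-a is an isomorphism, so we may take the
   root to be the first column, and start from the even rows of the last
   column.  Off the root column a vertex has only row neighbours, so every even
   row fills from right to left.  The odd rows then fill in increasing order:
   (root, b-1) forces (root, b), and row b fills from left to right because the
   extra neighbours of (root, b) lie in the already filled rows b-1 and b+1. *)

Lemma iter_extensive_fix (T : finType) (F : {set T} -> {set T}) (S : {set T}) :
  (forall X : {set T}, X \subset F X) -> F (iter #|T| F S) = iter #|T| F S.
Proof.
move=> F_ext; set n := #|T|.
suff /'exists_eqP[k /= Ek] : [exists k : 'I_n.+1, iter k F S == iter k.+1 F S].
  by rewrite -(subnK (leq_ord k)) iterD iter_fix.
apply: contraT => /existsPn /(_ (Ordinal _)) /= neq_iter.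
suff iter_big k : k <= n.+1 -> k <= #|iter k F S|.
  by have := iter_big _ (leqnn _); rewrite ltnNge max_card.
elim: k => [|k IHk] k_lt //=; apply: (leq_ltn_trans (IHk (ltnW k_lt))).
by rewrite proper_card // properEneq F_ext andbT neq_iter.
Qed.

Section ZeroForcing.
Variables (T : finType) (e : rel T).

Lemma sub_force_step (F : {set T}) : F \subset force_step e F.
Proof. exact: subsetUl. Qed.

Lemma sub_zf_closure (S : {set T}) : S \subset zf_closure e S.
Proof.
rewrite /zf_closure; elim: #|T| => //= n IHn.
exact: subset_trans IHn (sub_force_step _).
Qed.

Lemma force_step_zf_closure (S : {set T}) :
  force_step e (zf_closure e S) = zf_closure e S.
Proof. exact/iter_extensive_fix/sub_force_step. Qed.

Lemma zf_closure_force (S : {set T}) (v u : T) :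
  v \in zf_closure e S -> e v u ->
  (forall x, e v x -> x != u -> x \in zf_closure e S) -> u \in zf_closure e S.
Proof.
set C := zf_closure e S => Cv vu Cnbr.
rewrite /C -force_step_zf_closure -/C in_setU; case: (boolP (u \in C)) => //= Cu.
rewrite inE Cu; apply/existsP; exists v; rewrite Cv vu /=.
apply/forallP => x; apply/implyP => /andP [vx Cx].
by apply: contraNT Cx; apply: Cnbr.
Qed.

Lemma zero_forcing_number_le (S : {set T}) :
  zero_forcing_set e S -> zero_forcing_number e <= #|S|.
Proof.
move=> zfS; rewrite /zero_forcing_number.
elim: (index_enum _) (mem_index_enum S) => // S' s IHs; rewrite inE big_cons.
case/predU1P => [<-|sS]; first by rewrite zfS geq_minl.
by case: ifP => _; rewrite ?geq_min IHs ?orbT.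
Qed.

End ZeroForcing.

Section Isomorphism.
Variables (T : finType) (e e' : rel T) (f : T -> T).
Hypotheses (f_inj : injective f) (f_mono : {mono f : x y / e x y >-> e' x y}).

Lemma force_step_preim (F : {set T}) :
  force_step e (f @^-1: F) = f @^-1: force_step e' F.
Proof.
apply/setP => u; rewrite !inE; congr (_ || (_ && _)).
apply/existsP/existsP => [[v /and3P [Fv vu /forallP nbr]] | [v' /and3P []]].
  exists (f v); rewrite inE in Fv; rewrite Fv f_mono vu /=.
  apply/forallP => x'; rewrite -[x'](f_invF f_inj) f_mono (inj_eq f_inj).
  by move: (nbr (invF f_inj x')); rewrite inE.
rewrite -[v'](f_invF f_inj) f_mono => Fv vu /forallP nbr.
exists (invF f_inj v'); rewrite inE Fv vu /=; apply/forallP => x.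
by move: (nbr (f x)); rewrite inE f_mono (inj_eq f_inj).
Qed.

Lemma zf_closure_preim (S : {set T}) :
  zf_closure e (f @^-1: S) = f @^-1: zf_closure e' S.
Proof.
by rewrite /zf_closure; elim: #|T| => //= n ->; rewrite force_step_preim.
Qed.

Lemma zero_forcing_set_preim (S : {set T}) :
  zero_forcing_set e' S -> zero_forcing_set e (f @^-1: S).
Proof. by rewrite /zero_forcing_set zf_closure_preim => /eqP ->; rewrite preimsetT. Qed.

Lemma zero_forcing_number_le_preim (S : {set T}) :
  zero_forcing_set e' S -> zero_forcing_number e <= #|S|.
Proof. by move/zero_forcing_set_preim/zero_forcing_number_le; rewrite card_preimset. Qed.

End Isomorphism.

Lemma ord_ind_up n (P : 'I_n.+1 -> Prop) :
  P ord0 ->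
  (forall a : 'I_n.+1, a < n -> (forall b : 'I_n.+1, b <= a -> P b) -> P (inord a.+1)) ->
  forall a, P a.
Proof.
move=> P0 PS; suff PK k (a : 'I_n.+1) : a <= k -> P a by move=> a; apply: (PK a).
elim: k a => [|k IHk] a ak.
  by have -> : a = ord0 by apply: val_inj => /=; lia.
have [|ka] := leqP a k; first exact: IHk.
have kn : k < n by have := ltn_ord a; lia.
have k_val : (inord k : 'I_n.+1) = k :> nat by rewrite inordK // ltnW.
have -> : a = inord (inord k : 'I_n.+1).+1.
  by apply: val_inj; rewrite /= k_val inordK //; lia.
by apply: PS => [|b]; rewrite k_val //; apply: IHk.
Qed.

Lemma ord_ind_down n (P : 'I_n.+1 -> Prop) :
  P ord_max ->
  (forall a : 'I_n.+1, 0 < a -> (forall b : 'I_n.+1, a <= b -> P b) -> P (inord a.-1)) ->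
  forall a, P a.
Proof.
move=> Pmax PS; suff PK k (a : 'I_n.+1) : n - k <= a -> P a.
  by move=> a; apply: (PK n); lia.
elim: k a => [|k IHk] a ak.
  by have -> : a = ord_max by apply: val_inj => /=; have := ltn_ord a; lia.
have [|ka] := leqP (n - k) a; first exact: IHk.
have k_val : (inord (n - k) : 'I_n.+1) = n - k :> nat.
  by rewrite inordK // ltnS leq_subr.
have -> : a = inord (inord (n - k) : 'I_n.+1).-1.
  by apply: val_inj; rewrite /= k_val inordK //; lia.
by apply: PS => [|b]; rewrite k_val; [lia | apply: IHk].
Qed.

Lemma path_adj_rev n (a b : 'I_n) : path_adj (rev_ord a) (rev_ord b) = path_adj a b.
Proof. by rewrite /path_adj /=; have := ltn_ord a; have := ltn_ord b; lia. Qed.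

Lemma path_hprodE w h (U : {set 'I_w}) (a a' : 'I_w) (b b' : 'I_h) :
  path_hprod U (a, b) (a', b') =
  [&& a == a', a \in U & path_adj b b'] || (b == b') && path_adj a a'.
Proof. by []. Qed.

Lemma path_hprod_rev w h (U : {set 'I_w}) :
  {mono (fun x : 'I_w * 'I_h => (rev_ord x.1, x.2)) :
    x y / path_hprod [set a | rev_ord a \in U] x y >-> path_hprod U x y}.
Proof.
by move=> [a b] [a' b']; rewrite !path_hprodE inE (inj_eq rev_ord_inj) path_adj_rev.
Qed.

Lemma first_column_zero_forcing w h (U : {set 'I_w.+1}) :
  zero_forcing_set (path_hprod U) [set (ord0, b) | b : 'I_h].
Proof.
apply/eqP/setP => -[a b]; rewrite inE.
elim/ord_ind_up: a b => [b | a aw IHa b].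
  exact/(subsetP (sub_zf_closure _ _))/imset_f.
apply: (@zf_closure_force _ _ _ (a, b)); first exact: IHa.
  by rewrite path_hprodE /path_adj inordK ?eqxx ?orbT.
move=> [a' b']; rewrite path_hprodE.
case/orP => [/and3P [/eqP <- _ _] | /andP [/eqP <- adj]] ne; first exact: IHa.
apply: IHa; case/orP: adj => /eqP a_a'; last lia.
have a'E : a' = inord a.+1 by apply: val_inj; rewrite /= inordK // a_a'.
by rewrite a'E eqxx in ne.
Qed.

Section RootAtFirstColumn.
Variables w h : nat.

Definition last_column_even_rows : {set 'I_w.+1 * 'I_h.+1} :=
  [set (ord_max, inord k.*2) | k : 'I_(uphalf h.+1)].

Lemma card_last_column_even_rows : #|last_column_even_rows| <= uphalf h.+1.
Proof. by rewrite (leq_trans (leq_imset_card _ _)) // card_ord. Qed.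

Lemma mem_last_column_even_rows (b : 'I_h.+1) :
  ~~ odd b -> (ord_max, b) \in last_column_even_rows.
Proof.
move=> b_even; apply/imsetP.
have b_half : b./2 < uphalf h.+1 by rewrite ltnS half_leq // -ltnS.
exists (Ordinal b_half) => //; congr (_, _); apply: val_inj.
by rewrite /= even_halfK // inordK.
Qed.

Let C := zf_closure (path_hprod [set ord0]) last_column_even_rows.

Lemma even_row_filled (b : 'I_h.+1) : ~~ odd b -> forall a, (a, b) \in C.
Proof.
move=> b_even; elim/ord_ind_down => [|a a_gt0 IHa].
  exact/(subsetP (sub_zf_closure _ _))/mem_last_column_even_rows.
have a_pred : (inord a.-1 : 'I_w.+1) = a.-1 :> nat.
  by rewrite inordK // (leq_ltn_trans (leq_pred a)).
apply: (@zf_closure_force _ _ _ (a, b)); first exact: IHa.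
  by rewrite path_hprodE /path_adj a_pred prednK // !eqxx !orbT.
move=> [a' b']; rewrite path_hprodE in_set1.
case/orP => [/and3P [_ /eqP a0 _] | /andP [/eqP <- adj]] ne.
  by rewrite a0 in a_gt0.
apply: IHa; case/orP: adj => /eqP a_a'; first lia.
have a'E : a' = inord a.-1 by apply: val_inj; rewrite /= a_pred -a_a'.
by rewrite a'E eqxx in ne.
Qed.

Lemma odd_row_filled (b : 'I_h.+1) : odd b ->
  (forall b' : 'I_h.+1, b' < b -> forall a, (a, b') \in C) -> forall a, (a, b) \in C.
Proof.
move=> b_odd IHb; have b_gt0 : 0 < b by move: b_odd; case: (nat_of_ord b).
have bp_val : (inord b.-1 : 'I_h.+1) = b.-1 :> nat.
  by rewrite inordK // (leq_ltn_trans (leq_pred b)).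
elim/ord_ind_up => [|a aw IHa].
  apply: (@zf_closure_force _ _ _ (ord0, inord b.-1)).
  - by apply: IHb; rewrite bp_val; lia.
  - by rewrite path_hprodE in_set1 /path_adj bp_val prednK // !eqxx.
  move=> [a' b']; rewrite path_hprodE in_set1.
  case/orP => [/and3P [/eqP <- _ adj] | /andP [/eqP <- _]] ne; last first.
    by apply: IHb; rewrite bp_val; lia.
  case/orP: adj => /eqP b_b'; last by apply: IHb; lia.
  have b'E : b' = b by apply: val_inj; rewrite /= -b_b' bp_val prednK.
  by rewrite b'E eqxx in ne.
apply: (@zf_closure_force _ _ _ (a, b)); first exact: IHa.
  by rewrite path_hprodE /path_adj inordK // !eqxx !orbT.
move=> [a' b']; rewrite path_hprodE in_set1.
case/orP => [/and3P [/eqP <- _ adj] | /andP [/eqP <- adj]] ne.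
  case/orP: adj => /eqP b_b'; last by apply: IHb; lia.
  by apply: even_row_filled; rewrite -b_b' /= negbK.
apply: IHa; case/orP: adj => /eqP a_a'; last lia.
have a'E : a' = inord a.+1 by apply: val_inj; rewrite /= inordK // a_a'.
by rewrite a'E eqxx in ne.
Qed.

Lemma last_column_even_rows_zero_forcing :
  zero_forcing_set (path_hprod [set ord0]) last_column_even_rows.
Proof.
apply/eqP/setP => -[a b]; rewrite inE.
elim/ord_ind_up: b a => [|b bh IHb]; first exact: even_row_filled.
have [b_odd | b_even] := boolP (odd (inord b.+1 : 'I_h.+1)).
  by apply: odd_row_filled => // b'; rewrite inordK // ltnS; exact: IHb.
exact: even_row_filled.
Qed.

End RootAtFirstColumn.

Theorem mainTheorem1 (w h : nat) (hw : 0 < w) (hh : 0 < h) :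
  (forall i : 'I_w, (val i = 0 \/ val i = w.-1) ->
     zero_forcing_number (@path_hprod w h [set i]) <= uphalf h)
  /\
  (forall i : 'I_w, 0 < val i < w.-1 ->
     zero_forcing_number (@path_hprod w h [set i]) <= h).
Proof.
case: w hw => // w _; case: h hh => // h _.
split=> i i_pos; last first.
  (* the bound holds for every root column *)
  have := zero_forcing_number_le (@first_column_zero_forcing w h.+1 [set i]).
  move/leq_trans; apply.
  by rewrite (leq_trans (leq_imset_card _ _)) // card_ord.
apply: leq_trans (card_last_column_even_rows w h).
case: i_pos => i_end.
  have -> : i = ord0 by apply: val_inj.
  exact/zero_forcing_number_le/last_column_even_rows_zero_forcing.
have rev_root : [set a | rev_ord a \in [set ord0]] = [set i].
  by apply/setP => a; rewrite !inE -!val_eqE /= i_end; have := ltn_ord a; lia.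
have rev_inj : injective (fun x : 'I_w.+1 * 'I_h.+1 => (rev_ord x.1, x.2)).
  by apply: (can_inj (g := fun x => (rev_ord x.1, x.2))) => -[a b]; rewrite /= rev_ordK.
rewrite -rev_root; apply: (zero_forcing_number_le_preim rev_inj (path_hprod_rev _)).
exact: last_column_even_rows_zero_forcing.
Qed.
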